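(* Let $G=\mathbb{Z}\wr F_2$ with $\mathbb{Z}=\langle a\rangle$, $F_2=F(x,y)$, and let $H=\langle x,y,[x,a]a,[y,a]a\rangle$. Let $G'=\langle a\rangle\wr(\langle s\rangle\wr\langle t\rangle)\cong\mathbb{Z}\wr(\mathbb{Z}\wr\mathbb{Z})$, set $x=ts$, $y=t$ in $G'$, and let $H'=\langle x,y,[x,a]a,[y,a]a\rangle\le G'$. Then $\mathrm{Dist}^G_H(n)\succeq 2^n$ and $\mathrm{Dist}^{G'}_{H'}(n)\succeq 2^n$.
   Context: Wreath products: for groups $L,K$, $L\wr K=W\rtimes K$ with $W=\bigoplus_{K}L$. Elements are pairs $(f,k)$ with $f:K\to L$ finitely supported, $k\in K$, multiplication $(f,k)(\hat f,\hat k)=(f+\hat f^{k},k\hat k)$ with $\hat f^{k}(v)=\hat f(vk^{-1})$. $K$ is identified with $\{(0,k)\}$ and $L$ with the $e$-indexed summand of $W$. All of $\langle a\rangle,\langle s\rangle,\langle t\rangle$ are infinite cyclic. Convention: $[x,a]=x^{-1}a^{-1}xa$. Distortion: if $G$ has finite generating set $S$ and a subgroup $H$ has finite generating set $T$, $\mathrm{Dist}^G_H(n)=\max\{|g|_T : g\in H,\ |g|_S\le n\}$, where $|g|_S$ is the word length on $S^{\pm1}$. $f\preceq g$ means there is $C>0$ with $f(n)\le Cg(Cn+C)+Cn+C$ for all $n$. $G$ is generated by $\{a,x,y\}$, $G'$ by $\{a,s,t\}$, and $H,H'$ by the listed four elements. *)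

From mathcomp Require Import all_boot all_order all_algebra.
From Stdlib Require Import ClassicalEpsilon.
Set Implicit Arguments. Unset Strict Implicit. Unset Printing Implicit Defensive.
Import GRing.Theory.
Local Open Scope ring_scope.

Record grp := Grp { car : Type; gmul : car -> car -> car; ginv : car -> car; gone : car }.

(* A word over a finite generating list S : letters (i, b) with i < size S,
   b = true meaning the inverse of the i-th generator. *)
Definition gen_letter (Gr : grp) (S : seq (car Gr)) (p : nat * bool) : car Gr :=
  let s := nth (gone Gr) S p.1 in if p.2 then ginv s else s.
Definition word_valid (Gr : grp) (S : seq (car Gr)) (w : seq (nat * bool)) : bool :=
  all (fun p => (p.1 < size S)%N) w.
Definition word_eval (Gr : grp) (S : seq (car Gr)) (w : seq (nat * bool)) : car Gr :=
  foldr (fun p acc => gmul (gen_letter S p) acc) (gone Gr) w.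

(* is_wordlen S g m : g lies in <S> and its word length |g|_S w.r.t. S^{+-1} is m *)
Definition is_wordlen (Gr : grp) (S : seq (car Gr)) (g : car Gr) (m : nat) : Prop :=
  (exists w, [/\ size w = m, word_valid S w & word_eval S w = g]) /\
  (forall w, word_valid S w -> word_eval S w = g -> (m <= size w)%N).

(* Dist_ge S T n M  <->  Dist^G_H(n) >= M, where H = <T>, G = <S>:
   some g in H with |g|_S <= n has |g|_T >= M. *)
Definition Dist_ge (Gr : grp) (S T : seq (car Gr)) (n M : nat) : Prop :=
  exists g l m, [/\ is_wordlen S g l, (l <= n)%N, is_wordlen T g m & (M <= m)%N].

(* (n |-> 2^n) \preceq Dist^G_H : exists C > 0, for all n,
   2^n <= C * Dist(C n + C) + C n + C. *)
Definition exp_preceq_Dist (Gr : grp) (S T : seq (car Gr)) : Prop :=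
  exists C : nat, (0 < C)%N /\ forall n : nat,
    exists M, Dist_ge S T (C * n + C) M /\ (2 ^ n <= C * M + C * n + C)%N.

Definition gcomm (Gr : grp) (x a : car Gr) : car Gr :=
  gmul (ginv x) (gmul (ginv a) (gmul x a)).

(* elements (f, k), f : K -> int (the restricted wreath product is the
   subgroup of finitely supported f), product
   (f,k)(f',k') = (f + f'^k, k k'), f'^k(v) = f'(v k^-1). *)
Definition wreath (K : grp) : grp :=
  @Grp ((car K -> int) * car K)
    (fun p q => (fun v => p.1 v + q.1 (gmul v (ginv p.2)), gmul p.2 q.2))
    (fun p => (fun v => - p.1 (gmul v p.2), ginv p.2))
    (fun _ => 0, gone K).

Definition wreath_a (K : grp) (dec : forall u v : car K, {u = v} + {u <> v}) : car (wreath K) :=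
  (fun v => if dec v (gone K) then 1 else 0, gone K).
Definition wreath_K (K : grp) (k : car K) : car (wreath K) := (fun _ => 0, k).

(* letter (g, e): g = false is x, g = true is y; e = true means inverse *)
Definition letter := (bool * bool)%type.
Definition linv (l : letter) : letter := (l.1, ~~ l.2).
Fixpoint reduced (w : seq letter) : bool :=
  match w with
  | l :: ((m :: _) as w') => (m != linv l) && reduced w'
  | _ => true
  end.
Definition red_cons (l : letter) (w : seq letter) : seq letter :=
  if w is m :: w' then (if m == linv l then w' else l :: w) else [:: l].
Definition freduce (w : seq letter) : seq letter := foldr red_cons [::] w.

Lemma red_cons_reduced l w : reduced w -> reduced (red_cons l w).
Proof.
case: w => [|m w] //= Hw; case: ifP => Hm.
- by case: w Hw => //= ? ? /andP[].
- by rewrite /= Hm Hw.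
Qed.

Lemma freduce_reduced w : reduced (freduce w).
Proof. by elim: w => [|l w IH] //=; apply: red_cons_reduced. Qed.

Definition F2T := {w : seq letter | reduced w}.
Definition F2mul (u v : F2T) : F2T :=
  exist _ (freduce (sval u ++ sval v)) (freduce_reduced _).
Definition F2inv (u : F2T) : F2T :=
  exist _ (freduce (rev (map linv (sval u)))) (freduce_reduced _).
Definition F2one : F2T := exist _ [::] (erefl true).
Definition F2 : grp := @Grp F2T F2mul F2inv F2one.
Definition F2x : F2T := exist _ [:: (false, false)] (erefl true).
Definition F2y : F2T := exist _ [:: (true, false)] (erefl true).

Definition G : grp := wreath F2.
Definition Ga : car G := @wreath_a F2 (fun u v : F2T => decP (u =P v)).
Definition Gx : car G := @wreath_K F2 F2x.
Definition Gy : car G := @wreath_K F2 F2y.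
Definition G_gens : seq (car G) := [:: Ga; Gx; Gy].
Definition H_gens : seq (car G) :=
  [:: Gx; Gy; gmul (gcomm Gx Ga) Ga; gmul (gcomm Gy Ga) Ga].

Definition ZwrZ : grp :=
  @Grp ((int -> int) * int)
    (fun p q => (fun v => p.1 v + q.1 (v - p.2), p.2 + q.2))
    (fun p => (fun v => - p.1 (v + p.2), - p.2))
    (fun _ => 0, 0).
Definition Ks : car ZwrZ := (fun v => if v == 0 then 1 else 0, 0).
Definition Kt : car ZwrZ := (fun _ => 0, 1).

Definition G' : grp := wreath ZwrZ.
Definition G'a : car G' := @wreath_a ZwrZ (fun u v : car ZwrZ => excluded_middle_informative (u = v)).
Definition G's : car G' := @wreath_K ZwrZ Ks.
Definition G't : car G' := @wreath_K ZwrZ Kt.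
Definition G'_gens : seq (car G') := [:: G'a; G's; G't].
Definition G'x : car G' := gmul G't G's.
Definition G'y : car G' := G't.
Definition H'_gens : seq (car G') :=
  [:: G'x; G'y; gmul (gcomm G'x G'a) G'a; gmul (gcomm G'y G'a) G'a].

(* The element g_n with lamp function [delta (x^-n) - delta (y^-n)] is the product of the
   conjugates of a and a^-1 by x^n and y^n, so its length in G is O(n).  In H, a word of
   length m has as lamp function a sum of at most m right translates of
   [+-(2 delta 1 - delta (z^-1))], z in {x, y}, one for each letter [([z,a] a)^+-1].  A weight
   c : K -> Q with |2 c(q) - c(z^-1 q)| <= 2 is then a linear functional bounded by 2m on such
   lamp functions, which forces |c(x^-n) - c(y^-n)| <= 2m.  On Z wr Z, with x = ts and y = t,
   the weight c(f, m) = 2^-m f(m+1) separates x^-n from y^-n by 2^n; on F_2 one pulls it back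
   along the homomorphism x |-> ts, y |-> t. *)

From mathcomp Require Import all_boot all_order all_algebra.
From mathcomp Require Import zify ring lra.
From Stdlib Require Import ClassicalEpsilon FunctionalExtensionality.
Set Implicit Arguments. Unset Strict Implicit. Unset Printing Implicit Defensive.
Import GRing.Theory Num.Theory Order.TTheory.
Local Open Scope ring_scope.

Definition group_laws (K : grp) :=
  [/\ (forall a b c, gmul (gmul a b) c = gmul a (gmul b c) :> car K),
      (forall a : car K, gmul (gone K) a = a), (forall a : car K, gmul a (gone K) = a),
      (forall a : car K, gmul (ginv a) a = gone K) &
      (forall a : car K, gmul a (ginv a) = gone K)].
Existing Class group_laws.

Definition subgroup_gens (Gr : grp) (x y a : car Gr) : seq (car Gr) :=
  [:: x; y; gmul (gcomm x a) a; gmul (gcomm y a) a].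

Fixpoint gpow (K : grp) (z : car K) (n : nat) : car K :=
  if n is n'.+1 then gmul z (gpow z n') else gone K.

Lemma gpowS (K : grp) (z : car K) n : gpow z n.+1 = gmul z (gpow z n).
Proof. by []. Qed.

Section GroupTheory.
Context {K : grp} {HK : group_laws K}.
Local Notation "x * y" := (@gmul K x y).
Local Notation "x ^-1" := (@ginv K x).
Local Notation "1" := (gone K).

Lemma mulgA (x y z : car K) : x * y * z = x * (y * z). Proof. by case: HK. Qed.
Lemma mul1g (x : car K) : 1 * x = x. Proof. by case: HK. Qed.
Lemma mulg1 (x : car K) : x * 1 = x. Proof. by case: HK. Qed.
Lemma mulVg (x : car K) : x^-1 * x = 1. Proof. by case: HK. Qed.
Lemma mulgV (x : car K) : x * x^-1 = 1. Proof. by case: HK. Qed.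

Lemma mulKg (x y : car K) : x^-1 * (x * y) = y.
Proof. by rewrite -mulgA mulVg mul1g. Qed.
Lemma mulVKg (x y : car K) : x * (x^-1 * y) = y.
Proof. by rewrite -mulgA mulgV mul1g. Qed.
Lemma mulgK (x y : car K) : y * x * x^-1 = y.
Proof. by rewrite mulgA mulgV mulg1. Qed.
Lemma mulgVK (x y : car K) : y * x^-1 * x = y.
Proof. by rewrite mulgA mulVg mulg1. Qed.

Lemma invgK (x : car K) : x^-1^-1 = x.
Proof. by rewrite -[RHS](mulKg x^-1) mulVg mulg1. Qed.
Lemma invg1 : 1^-1 = 1.
Proof. by rewrite -[LHS]mulg1 mulVg. Qed.
Lemma invMg (x y : car K) : (x * y)^-1 = y^-1 * x^-1.
Proof.
have h : x * y * (y^-1 * x^-1) = 1 by rewrite mulgA mulVKg mulgV.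
by rewrite -[LHS]mulg1 -h mulKg.
Qed.

Lemma eq_mulgV (x y z : car K) : (x * y^-1 = z) <-> (x = z * y).
Proof. by split=> [<-|->]; rewrite ?mulgVK ?mulgK. Qed.

Lemma gpowSr (z : car K) n : gpow z n.+1 = gpow z n * z.
Proof.
elim: n => [|n IH] /=; first by rewrite mul1g mulg1.
by rewrite /= in IH; rewrite {1}IH -mulgA.
Qed.

End GroupTheory.

Section Words.
Variables (Gr : grp) (S : seq (car Gr)).

Definition word_act (w : seq (nat * bool)) (p : car Gr) : car Gr :=
  foldr (fun l acc => gmul (gen_letter S l) acc) p w.
Definition word_inv (w : seq (nat * bool)) := rev (map (fun l => (l.1, ~~ l.2)) w).
Definition word_pow (w : seq (nat * bool)) n := flatten (nseq n w).

Lemma word_evalE w : word_eval S w = word_act w (gone Gr).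
Proof. by []. Qed.

Lemma word_act1 l p : word_act [:: l] p = gmul (gen_letter S l) p.
Proof. by []. Qed.

Lemma word_act_cat w1 w2 p : word_act (w1 ++ w2) p = word_act w1 (word_act w2 p).
Proof. exact: foldr_cat. Qed.

Lemma word_powS w n : word_pow w n.+1 = w ++ word_pow w n.
Proof. by []. Qed.

Lemma word_act_inv w p :
  (forall x q : car Gr, gmul x (gmul (ginv x) q) = q) ->
  (forall x q : car Gr, gmul (ginv x) (gmul x q) = q) ->
  word_act w (word_act (word_inv w) p) = p.
Proof.
move=> mulVK mulKV; elim: w p => [|[i b] w IH] p //=.
rewrite /word_inv map_cons rev_cons -cats1 word_act_cat -/(word_inv w) IH /=.
by rewrite /gen_letter; case: b => /=; rewrite ?mulKV ?mulVK.
Qed.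

Lemma word_valid_cat w1 w2 :
  word_valid S (w1 ++ w2) = word_valid S w1 && word_valid S w2.
Proof. exact: all_cat. Qed.

Lemma word_valid_inv w : word_valid S (word_inv w) = word_valid S w.
Proof. by rewrite /word_valid all_rev all_map. Qed.

Lemma word_valid_pow w n : word_valid S w -> word_valid S (word_pow w n).
Proof. by move=> hw; elim: n => [|n IH] //; rewrite word_powS word_valid_cat hw. Qed.

Lemma size_word_inv w : size (word_inv w) = size w.
Proof. by rewrite size_rev size_map. Qed.

Lemma size_word_pow w n : size (word_pow w n) = (size w * n)%N.
Proof. by elim: n => [|n IH]; rewrite ?muln0 // word_powS size_cat IH mulnS. Qed.

Lemma is_wordlen_exists g w : word_valid S w -> word_eval S w = g ->
  exists2 m, is_wordlen S g m & (m <= size w)%N.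
Proof.
move=> hv he.
pose P n := exists w', [/\ size w' = n, word_valid S w' & word_eval S w' = g].
pose Pb n := if excluded_middle_informative (P n) then true else false.
have PbP n : reflect (P n) (Pb n).
  by rewrite /Pb; case: excluded_middle_informative => h; constructor.
have Pw : Pb (size w) by apply/PbP; exists w.
have [m /PbP Pm minm] := ex_minnP (ex_intro Pb _ Pw).
exists m; last exact: minm.
by split=> // w' hv' he'; apply/minm/PbP; exists w'.
Qed.

End Words.

Definition is_morph (K K' : grp) (phi : car K -> car K') :=
  forall u v, phi (gmul u v) = gmul (phi u) (phi v).

Section Morphisms.
Context {K K' : grp} {HK : group_laws K} {HK' : group_laws K'}.
Variable phi : car K -> car K'.
Hypothesis Hphi : is_morph phi.

Lemma morph1 : phi (gone K) = gone K'.
Proof.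
have h := Hphi (gone K) (gone K); rewrite mul1g in h.
by rewrite -[LHS](mulKg (phi (gone K))) -h mulVg.
Qed.

Lemma morphV u : phi (ginv u) = ginv (phi u).
Proof.
have h := Hphi (ginv u) u; rewrite mulVg morph1 in h.
by rewrite -[LHS](mulgK (phi u)) -h mul1g.
Qed.

Lemma morph_gpow u n : phi (gpow u n) = gpow (phi u) n.
Proof. by elim: n => [|n IH] /=; rewrite ?morph1 // Hphi IH. Qed.

End Morphisms.

Section Wreath.
Context {K : grp} {HK : group_laws K}.
Local Notation W := (wreath K).
Local Notation wK := (@wreath_K K).

Definition delta (q v : car K) : int :=
  if excluded_middle_informative (v = q) then 1 else 0.

Definition base (f : car K -> int) : car W := (f, gone K).

Lemma delta_eq q q' v v' : (v = q <-> v' = q') -> delta q v = delta q' v'.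
Proof.
rewrite /delta => e; do 2 case: excluded_middle_informative => //=; tauto.
Qed.

Lemma deltaP q v : reflect (v = q) (delta q v == 1).
Proof. by rewrite /delta; case: excluded_middle_informative => h; constructor. Qed.

Lemma delta_id q : delta q q = 1.
Proof. by rewrite /delta; case: excluded_middle_informative. Qed.

Lemma delta_neq q v : v <> q -> delta q v = 0.
Proof. by rewrite /delta; case: excluded_middle_informative. Qed.

Lemma delta_mulr q v z : delta q (gmul v (ginv z)) = delta (gmul q z) v.
Proof. exact/delta_eq/eq_mulgV. Qed.

(* [wreath K] twists by [f (v k^-1)], a right action, so its product is associative only
   for abelian K.  Words are therefore evaluated through their action [word_act] by left
   multiplication, which only needs the two cancellation laws below. *)
Lemma wreath_mulKg (x p : car W) : gmul (ginv x) (gmul x p) = p.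
Proof.
case: x p => [f k] [g l]; congr (_, _); last by rewrite /= mulKg.
by apply: functional_extensionality => v /=; rewrite invgK mulgK addKr.
Qed.

Lemma wreath_mulVKg (x p : car W) : gmul x (gmul (ginv x) p) = p.
Proof.
case: x p => [f k] [g l]; congr (_, _); last by rewrite /= mulVKg.
by apply: functional_extensionality => v /=; rewrite invgK mulgVK addNKr.
Qed.

Lemma wreath_K_mulE z (p : car W) :
  gmul (wK z) p = (fun v => p.1 (gmul v (ginv z)), gmul z p.2).
Proof. by congr (_, _); apply: functional_extensionality => v /=; rewrite add0r. Qed.

Lemma wreath_K_mul u v : gmul (wK u) (wK v) = wK (gmul u v).
Proof. by congr (_, _); apply: functional_extensionality => w /=; rewrite addr0. Qed.

Lemma wreath_K_invE z (p : car W) :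
  gmul (ginv (wK z)) p = (fun v => p.1 (gmul v (ginv (ginv z))), gmul (ginv z) p.2).
Proof. by congr (_, _); apply: functional_extensionality => v /=; rewrite oppr0 add0r. Qed.

Lemma base_mulE f (p : car W) : gmul (base f) p = (fun v => f v + p.1 v, p.2).
Proof.
by congr (_, _); [apply: functional_extensionality => v /=; rewrite invg1 mulg1 | exact: mul1g].
Qed.

Lemma base_invE f (p : car W) : gmul (ginv (base f)) p = (fun v => - f v + p.1 v, p.2).
Proof.
by congr (_, _); [apply: functional_extensionality => v /=; rewrite mulg1 invgK mulg1
                 | rewrite /= invg1 mul1g].
Qed.

Lemma commutator_delta z :
  gmul (gcomm (wK z) (base (delta (gone K)))) (base (delta (gone K))) =
  base (fun v => 2 * delta (gone K) v - delta (ginv z) v).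
Proof.
rewrite /gcomm wreath_K_mulE base_invE wreath_K_invE /= !mulg1 mulVg invg1 invgK.
congr (_, _); apply: functional_extensionality => v /=.
rewrite mulgK mulg1 (@delta_eq (gone K) (ginv z) (gmul v z) v); first by ring.
by split=> [h|->]; [rewrite -(mulgK z v) h mul1g | exact: mulVg].
Qed.

Variable S : seq (car W).

Definition word_translates (w : seq (nat * bool)) (z : car K) :=
  exists kappa : car K -> car K, forall p,
    word_act S w p = (fun v => p.1 (gmul v (ginv z)), kappa p.2).
Definition word_adds (w : seq (nat * bool)) (f : car K -> int) :=
  forall p, word_act S w p = (fun v => f v + p.1 v, p.2).

Lemma word_act_invW w p : word_act S w (word_act S (word_inv w) p) = p.
Proof. exact/word_act_inv/wreath_mulKg/wreath_mulVKg. Qed.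

Lemma letter_translates i z : nth (gone W) S i = wK z -> word_translates [:: (i, false)] z.
Proof.
move=> hi; exists (gmul z) => p; rewrite word_act1.
have -> : gen_letter S (i, false) = wK z by rewrite /gen_letter hi.
exact: wreath_K_mulE.
Qed.

Lemma letterV_translates i z : nth (gone W) S i = wK z ->
  word_translates [:: (i, true)] (ginv z).
Proof.
move=> hi; exists (gmul (ginv z)) => p; rewrite word_act1.
have -> : gen_letter S (i, true) = ginv (wK z) by rewrite /gen_letter hi.
exact: wreath_K_invE.
Qed.

Lemma letter_adds i f : nth (gone W) S i = base f -> word_adds [:: (i, false)] f.
Proof.
move=> hi p; rewrite word_act1.
have -> : gen_letter S (i, false) = base f by rewrite /gen_letter hi.
exact: base_mulE.
Qed.

Lemma word_translates_cat w1 w2 z1 z2 : word_translates w1 z1 -> word_translates w2 z2 ->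
  word_translates (w1 ++ w2) (gmul z2 z1).
Proof.
move=> [k1 h1] [k2 h2]; exists (fun k => k1 (k2 k)) => p.
rewrite word_act_cat h2 h1 /=; congr (_, _).
by apply: functional_extensionality => v; rewrite invMg mulgA.
Qed.

Lemma word_adds_ext w f g : (forall v, f v = g v) -> word_adds w f -> word_adds w g.
Proof. by move=> /functional_extensionality ->. Qed.

Lemma word_adds_eval w f : word_adds w f -> word_eval S w = base f.
Proof.
move=> hw; rewrite word_evalE hw; congr (_, _).
by apply: functional_extensionality => v; rewrite addr0.
Qed.

Lemma word_adds_cat w1 w2 f1 f2 : word_adds w1 f1 -> word_adds w2 f2 ->
  word_adds (w1 ++ w2) (fun v => f1 v + f2 v).
Proof.
move=> h1 h2 p; rewrite word_act_cat h2 h1 /=; congr (_, _).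
by apply: functional_extensionality => v; rewrite addrA.
Qed.

Lemma word_adds_inv w f : word_adds w f -> word_adds (word_inv w) (fun v => - f v).
Proof.
move=> hw p; rewrite -[in RHS](word_act_invW w p) hw /=.
case: (word_act S (word_inv w) p) => g k /=; congr (_, _).
by apply: functional_extensionality => v; rewrite addKr.
Qed.

Lemma word_adds_pow w f n : word_adds w f ->
  word_adds (word_pow w n) (fun v => n%:Z * f v).
Proof.
move=> hw; elim: n => [|n IH] p.
  by case: p => g k; congr (_, _); apply: functional_extensionality => v; rewrite mul0r add0r.
rewrite word_powS word_act_cat IH hw /=; congr (_, _).
by apply: functional_extensionality => v; rewrite -[n.+1]addn1 PoszD; ring.
Qed.

Lemma word_translates_pow w z n : word_translates w z ->
  word_translates (word_pow w n) (gpow z n).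
Proof.
move=> [kappa hw]; elim: n => [|n [kappa' IH]].
  by exists id => -[g k]; congr (_, _); apply: functional_extensionality => v; rewrite invg1 mulg1.
exists (fun k => kappa (kappa' k)) => p; rewrite gpowSr word_powS word_act_cat IH hw /=.
by congr (_, _); apply: functional_extensionality => v; rewrite invMg mulgA.
Qed.

Lemma word_adds_conj w wa z f : word_translates w z -> word_adds wa f ->
  word_adds (w ++ wa ++ word_inv w) (fun v => f (gmul v (ginv z))).
Proof.
move=> [kappa hw] ha p; rewrite !word_act_cat -[in RHS](word_act_invW w p) ha !hw /=.
by congr (_, _); apply: functional_extensionality => v.
Qed.

End Wreath.

Definition step_bounded (K : grp) (c : car K -> rat) (X Y : car K) :=
  forall Z q, Z = X \/ Z = Y -> `|2 * c q - c (gmul (ginv Z) q)| <= 2.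
Definition exp_separating (K : grp) (c : car K -> rat) (X Y : car K) :=
  forall n, (2 ^ n)%:R <= `|c (gpow (ginv X) n) - c (gpow (ginv Y) n)| + 1.

Section Weights.
Context {K : grp} {HK : group_laws K}.
Variable c : car K -> rat.

Definition fsum (P : seq (car K * int)) (v : car K) : int := \sum_(p <- P) p.2 * delta p.1 v.
Definition wsum (P : seq (car K * int)) : rat := \sum_(p <- P) p.2%:~R * c p.1.

Lemma wsum_eq0 P : (forall v, fsum P v = 0) -> wsum P = 0.
Proof.
move: {2}(size P) (leqnn (size P)) => n.
elim: n P => [|n IH] [|[q k] P] //= hsz h0; try by rewrite /wsum big_nil.
pose at_q (p : car K * int) := delta p.1 q == 1.
have at_qE p : at_q p -> p.1 = q by move/deltaP.
pose k' := k + \sum_(p <- P | at_q p) p.2.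
have fsumE v : fsum ((q, k) :: P) v = k' * delta q v + fsum [seq p <- P | ~~ at_q p] v.
  rewrite /fsum big_cons (bigID at_q) big_filter /= addrA mulrDl mulr_suml.
  by congr (_ + _ + _); apply: eq_bigr => p /at_qE ->.
have wsumE : wsum ((q, k) :: P) = k'%:~R * c q + wsum [seq p <- P | ~~ at_q p].
  rewrite /wsum big_cons (bigID at_q) big_filter /= addrA intrD mulrDl raddf_sum mulr_suml.
  by congr (_ + _ + _); apply: eq_bigr => p /at_qE ->.
have off_q : fsum [seq p <- P | ~~ at_q p] q = 0.
  rewrite /fsum big_filter big1 // => p hp.
  by rewrite delta_neq ?mulr0 // => e; move: hp; rewrite /at_q e; case: deltaP.
have k'0 : k' = 0 by have := h0 q; rewrite fsumE off_q addr0 delta_id mulr1.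
rewrite wsumE k'0 mul0r add0r IH //.
  by rewrite size_filter (leq_trans (count_size _ _)).
by move=> v; rewrite -(h0 v) fsumE k'0 mul0r add0r.
Qed.
Variables X Y : car K.
Hypothesis hc : step_bounded c X Y.

Definition Zof (b : bool) := if b then X else Y.

(* [(q, neg, b)] stands for [(-1)^neg] times the translate by q of the lamp function
   [2 delta 1 - delta (Z_b^-1)] of the generator [[Z_b, a] a]. *)
Definition term_pairs (t : car K * bool * bool) : seq (car K * int) :=
  let: (q, neg, b) := t in
  [:: (q, (-1) ^+ neg * 2); (gmul (ginv (Zof b)) q, - (-1) ^+ neg)].
Definition terms_pairs L := flatten (map term_pairs L).
Definition shift_term z (t : car K * bool * bool) := (gmul t.1.1 z, t.1.2, t.2).

Lemma terms_pairs_cons t L : terms_pairs (t :: L) = term_pairs t ++ terms_pairs L.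
Proof. by []. Qed.

Lemma fsum_cat P Q v : fsum (P ++ Q) v = fsum P v + fsum Q v.
Proof. exact: big_cat. Qed.

Lemma fsum_term q neg b v : fsum (term_pairs (q, neg, b)) v =
  (-1) ^+ neg * (2 * delta q v - delta (gmul (ginv (Zof b)) q) v).
Proof. by rewrite /fsum !big_cons big_nil /=; ring. Qed.

Lemma fsum_shift z L v :
  fsum (terms_pairs (map (shift_term z) L)) v = fsum (terms_pairs L) (gmul v (ginv z)).
Proof.
elim: L => [|[[q neg] b] L IH]; first by rewrite /fsum !big_nil.
rewrite /= !terms_pairs_cons !fsum_cat IH; congr (_ + _).
by rewrite /fsum !big_cons !big_nil /= !delta_mulr mulgA.
Qed.

Lemma wsum_term_le t : `|wsum (term_pairs t)| <= 2.
Proof.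
case: t => [[q neg] b]; rewrite /wsum !big_cons big_nil /= addr0.
have -> : ((-1) ^+ neg * 2)%:~R * c q + (- (-1) ^+ neg)%:~R * c (gmul (ginv (Zof b)) q) =
          (-1) ^+ neg * (2 * c q - c (gmul (ginv (Zof b)) q)).
  by rewrite intrM intrN rmorph_sign; ring.
by rewrite normrM normr_sign mul1r; apply: hc; case: b; [left | right].
Qed.

Lemma wsum_terms_le L : `|wsum (terms_pairs L)| <= 2 * (size L)%:R.
Proof.
elim: L => [|t L IH]; first by rewrite /wsum big_nil normr0 mulr0.
rewrite terms_pairs_cons /wsum big_cat -/(wsum _) -/(wsum _) /=.
rewrite -[(size L).+1]addn1 natrD mulrDr mulr1 addrC (le_trans (ler_normD _ _)) // lerD //.
exact: wsum_term_le.
Qed.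

End Weights.

Definition gen_idx (b : bool) : nat := if b then 0 else 1.

Fixpoint subgroup_word (b : bool) (n : nat) : seq (nat * bool) :=
  if n is n'.+1 then
    word_pow [:: ((gen_idx b).+2, false)] (2 ^ n') ++
    ([:: (gen_idx b, true)] ++ subgroup_word b n' ++ word_inv [:: (gen_idx b, true)])
  else [::].

Lemma subgroup_wordS b n : subgroup_word b n.+1 =
  word_pow [:: ((gen_idx b).+2, false)] (2 ^ n) ++
  ([:: (gen_idx b, true)] ++ subgroup_word b n ++ word_inv [:: (gen_idx b, true)]).
Proof. by []. Qed.

Section SubgroupWords.
Context {K : grp} {HK : group_laws K}.
Variables (X Y : car K) (c : car K -> rat).
Hypothesis hc : step_bounded c X Y.
Local Notation W := (wreath K).
Local Notation T :=
  (subgroup_gens (wreath_K X) (wreath_K Y) (base (delta (gone K)))).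

Lemma subgroup_xV_translates b :
  word_translates T [:: (gen_idx b, true)] (ginv (Zof X Y b)).
Proof. by apply: letterV_translates; case: b. Qed.

Lemma subgroup_u_adds b : word_adds T [:: ((gen_idx b).+2, false)]
  (fun v => 2 * delta (gone K) v - delta (ginv (Zof X Y b)) v).
Proof. by apply: letter_adds; rewrite -commutator_delta; case: b. Qed.

Lemma subgroup_letter l : (l.1 < 4)%N ->
  (exists z, word_translates T [:: l] z) \/
  (exists t, word_adds T [:: l] (fsum (term_pairs X Y t))).
Proof.
have hx b neg : exists z, word_translates T [:: (gen_idx b, neg)] z.
  case: neg; first by exists (ginv (Zof X Y b)); apply: subgroup_xV_translates.
  by exists (Zof X Y b); apply: letter_translates; case: b.
have hu b neg : exists t, word_adds T [:: ((gen_idx b).+2, neg)] (fsum (term_pairs X Y t)).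
  exists (gone K, neg, b); case: neg; [apply: word_adds_ext (word_adds_inv (subgroup_u_adds b)) |
                                     apply: word_adds_ext (subgroup_u_adds b)];
  by move=> v; rewrite fsum_term mulg1 /=; ring.
case: l => [[|[|[|[|i]]]] neg] //= _.
- by left; apply: (hx true).
- by left; apply: (hx false).
- by right; apply: (hu true).
- by right; apply: (hu false).
Qed.

Lemma subgroup_word_terms w : word_valid T w ->
  exists2 L, (size L <= size w)%N & (word_eval T w).1 = fsum (terms_pairs X Y L).
Proof.
elim: w => [_|l w IH /andP[hl /IH [L hL hw]]].
  by exists [::] => //; apply: functional_extensionality => v; rewrite /fsum big_nil.
rewrite -[word_eval _ _]/(word_act T [:: l] (word_eval T w)).
have [[z [kappa ->]]|[t ->]] := subgroup_letter hl; rewrite /= hw.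
  exists (map (shift_term z) L); first by rewrite size_map ltnW.
  by apply: functional_extensionality => v; rewrite fsum_shift.
exists (t :: L) => //.
by apply: functional_extensionality => v; rewrite terms_pairs_cons fsum_cat.
Qed.

Lemma subgroup_weight_bound w A B : word_valid T w ->
  (word_eval T w).1 = (fun v => delta A v - delta B v) ->
  `|c A - c B| <= 2 * (size w)%:R.
Proof.
move=> /subgroup_word_terms [L hL hw] hAB.
have wsumE : wsum c (terms_pairs X Y L) = c A - c B.
  have : wsum c (terms_pairs X Y L ++ [:: (A, -1); (B, 1)]) = 0.
    apply: wsum_eq0 => v.
    by rewrite fsum_cat -hw hAB /fsum !big_cons big_nil /=; ring.
  rewrite /wsum big_cat !big_cons big_nil /= -/(wsum c _).
  lra.
by rewrite -wsumE (le_trans (wsum_terms_le hc L)) // ler_pM2l // ler_nat.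
Qed.

Lemma subgroup_word_valid b n : word_valid T (subgroup_word b n).
Proof.
have [hx hu] : word_valid T [:: (gen_idx b, true)] /\ word_valid T [:: ((gen_idx b).+2, false)].
  by case: b.
elim: n => [|n IH] //.
by rewrite subgroup_wordS !word_valid_cat word_valid_inv hx IH word_valid_pow.
Qed.

Lemma subgroup_word_adds b n : word_adds T (subgroup_word b n)
  (fun v => (2 ^ n)%:Z * delta (gone K) v - delta (gpow (ginv (Zof X Y b)) n) v).
Proof.
elim: n => [|n IH].
  move=> [f k]; congr (_, _); apply: functional_extensionality => v /=.
  by rewrite mul1r subrr add0r.
rewrite subgroup_wordS; apply: word_adds_ext (word_adds_cat (word_adds_pow _ (subgroup_u_adds b))
                                     (word_adds_conj (subgroup_xV_translates b) IH)) => v.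
rewrite !delta_mulr mul1g -gpowSr expnS PoszM; ring.
Qed.

Theorem exp_distortion (S : seq (car W)) wa wx wy :
  word_valid S (wa ++ wx ++ wy) -> word_adds S wa (delta (gone K)) ->
  word_translates S wx (ginv X) -> word_translates S wy (ginv Y) ->
  exp_separating c X Y -> exp_preceq_Dist S T.
Proof.
rewrite !word_valid_cat => /and3P[va vx vy] ha hx hy hgrowth.
pose C := (2 * (size wa + size wx + size wy) + 2)%N.
exists C; split=> [|n]; first by rewrite /C addn2.
pose A := gpow (ginv X) n; pose B := gpow (ginv Y) n.
pose g := base (fun v => delta A v - delta B v).
pose conj_a w := word_pow w n ++ wa ++ word_inv (word_pow w n).
have conj_aE w z : word_translates S w z -> word_adds S (conj_a w) (delta (gpow z n)).
  move=> hw; apply: word_adds_ext (word_adds_conj (word_translates_pow n hw) ha) => v.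
  by rewrite delta_mulr mul1g.
pose sword := conj_a wx ++ word_inv (conj_a wy).
pose hword := subgroup_word false n ++ word_inv (subgroup_word true n).
have [l hl l_le] : exists2 l, is_wordlen S g l & (l <= size sword)%N.
  apply: is_wordlen_exists.
    by rewrite /sword /conj_a !(word_valid_cat, word_valid_inv) va !word_valid_pow.
  exact/word_adds_eval/(word_adds_cat (conj_aE _ _ hx) (word_adds_inv (conj_aE _ _ hy))).
have [m hm _] : exists2 m, is_wordlen T g m & (m <= size hword)%N.
  apply: is_wordlen_exists; first by rewrite word_valid_cat word_valid_inv !subgroup_word_valid.
  apply/word_adds_eval/(word_adds_ext _ (word_adds_cat (subgroup_word_adds false n)
                                          (word_adds_inv (subgroup_word_adds true n)))).
  by move=> v /=; ring.
exists m; split.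
  exists g, l, m; split => //.
  by move: l_le; rewrite /sword /conj_a !(size_cat, size_word_inv, size_word_pow) /C; nia.
have [[w [<- vw ew]] _] := hm.
have hb := subgroup_weight_bound vw (f_equal fst ew).
have : (2 ^ n)%:R <= (2 * size w + 1)%:R :> rat.
  by rewrite natrD natrM (le_trans (hgrowth n)) // lerD2r.
by rewrite ler_nat /C; nia.
Qed.

End SubgroupWords.

Definition Zgrp : grp := @Grp int +%R -%R 0.

Lemma Zgrp_laws : group_laws Zgrp.
Proof. by split=> /= *; rewrite ?addrA ?add0r ?addr0 ?addNr ?addrN. Qed.

Lemma wreath_laws_abelian (K : grp) : group_laws K ->
  (forall x y : car K, gmul x y = gmul y x) -> group_laws (wreath K).
Proof.
move=> HK mulC; split.
- move=> [f k] [g l] [h m]; congr (_, _); last by rewrite /= mulgA.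
  by apply: functional_extensionality => v /=; rewrite addrA invMg mulgA (mulC (ginv l)).
- move=> [f k]; congr (_, _); last by rewrite /= mul1g.
  by apply: functional_extensionality => v /=; rewrite invg1 mulg1 add0r.
- move=> [f k]; congr (_, _); last by rewrite /= mulg1.
  by apply: functional_extensionality => v /=; rewrite addr0.
- move=> [f k]; congr (_, _); last by rewrite /= mulVg.
  by apply: functional_extensionality => v /=; rewrite invgK addNr.
- move=> [f k]; congr (_, _); last by rewrite /= mulgV.
  by apply: functional_extensionality => v /=; rewrite mulgVK addrN.
Qed.

#[export] Instance ZwrZ_laws : group_laws ZwrZ := wreath_laws_abelian Zgrp_laws (@addrC _).

Definition Kts : car ZwrZ := gmul Kt Ks.
Definition cZ (q : car ZwrZ) : rat := (2 : rat) ^ (- q.2) * (q.1 (q.2 + 1))%:~R.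

Lemma cZ_mulVts q : cZ (gmul (ginv Kts) q) = 2 * cZ q - 2 * (q.2 == 0)%:R.
Proof.
case: q => f m; rewrite /cZ /= !addr0 !add0r.
have -> : - 1 + m + 1 + 1 - 1 = m by ring.
have -> : - 1 + m + 1 - - 1 = m + 1 by ring.
rewrite opprD opprK expfzDr // expr1z intrD intrN.
by case: eqP => [->|_]; rewrite /= ?oppr0 ?expr0z ?add0r; ring.
Qed.

Lemma cZ_mulVt q : cZ (gmul (ginv Kt) q) = 2 * cZ q.
Proof.
case: q => f m; rewrite /cZ /= !oppr0 !add0r.
have -> : - 1 + m + 1 - - 1 = m + 1 by ring.
by rewrite opprD opprK expfzDr // expr1z mulrA.
Qed.

Lemma cZ_step_bounded : step_bounded cZ Kts Kt.
Proof.
move=> Z q [] ->; last by rewrite cZ_mulVt subrr normr0.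
rewrite cZ_mulVts opprB addrC subrK.
by case: (_ == _); rewrite ?mulr1 ?mulr0 ?normr0 // ger0_norm.
Qed.

Lemma gpow_snd (Z : car ZwrZ) n : Z.2 = 1 -> (gpow (ginv Z) n).2 = - n%:Z.
Proof.
move=> hZ; elim: n => [|n IH] //=; rewrite IH hZ -[n.+1]addn1 PoszD; ring.
Qed.

Lemma cZ_gpow_ts n : cZ (gpow (ginv Kts) n) = (n == 0)%:R - 2 ^+ n.
Proof.
elim: n => [|n IH]; first by rewrite /cZ /= mulr0 subrr.
rewrite gpowS cZ_mulVts IH gpow_snd // oppr_eq0 eqz_nat.
case: n {IH} => [|n]; rewrite /= ?exprS ?expr0; ring.
Qed.

Lemma cZ_gpow_t n : cZ (gpow (ginv Kt) n) = 0.
Proof.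
by elim: n => [|n IH]; rewrite ?gpowS ?cZ_mulVt ?IH ?mulr0 // /cZ /= mulr0.
Qed.

Lemma cZ_exp_separating : exp_separating cZ Kts Kt.
Proof.
move=> n; rewrite cZ_gpow_ts cZ_gpow_t subr0 natrX.
case: n => [|n]; first by rewrite /= subrr normr0 add0r.
by rewrite /= sub0r normrN ger0_norm ?exprn_ge0 // lerDl.
Qed.

Lemma linvK : involutive linv.
Proof. by case=> ? ?; rewrite /linv /= negbK. Qed.

Lemma reduced_behead l w : reduced (l :: w) -> reduced w.
Proof. by case: w => //= m w /andP[]. Qed.

Lemma freduce_id w : reduced w -> freduce w = w.
Proof.
elim: w => [|l w IH] //= hw; rewrite IH ?(reduced_behead hw) //.
by case: w hw {IH} => //= m w /andP[/negbTE -> _].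
Qed.

Lemma red_consK l w : reduced w -> red_cons l (red_cons (linv l) w) = w.
Proof.
case: w => [|m w] /=; first by rewrite eqxx.
case: eqP => [->|_] hw; last by rewrite /= eqxx.
by case: w hw => [|m' w] /=; rewrite linvK // => /andP[/negbTE -> _]; rewrite linvK.
Qed.

Lemma foldr_red_cons_reduced r w : reduced r -> reduced (foldr red_cons r w).
Proof. by move=> hr; elim: w => //= l w IH; apply: red_cons_reduced. Qed.

Lemma foldr_red_cons r l w : reduced r -> reduced w ->
  foldr red_cons r (red_cons l w) = red_cons l (foldr red_cons r w).
Proof.
case: w => [|m w] //= hr hw; case: eqP => [->|] //=.
by rewrite red_consK // foldr_red_cons_reduced.
Qed.

Lemma foldr_freduce r w : reduced r ->
  foldr red_cons r (freduce w) = foldr red_cons r w.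
Proof.
by move=> hr; elim: w => //= l w IH; rewrite foldr_red_cons ?IH ?freduce_reduced.
Qed.

Lemma freduce_catl u w : freduce (freduce u ++ w) = freduce (u ++ w).
Proof. by rewrite /freduce !foldr_cat foldr_freduce // freduce_reduced. Qed.

Lemma freduce_catr u w : freduce (u ++ freduce w) = freduce (u ++ w).
Proof.
rewrite /freduce !foldr_cat; congr foldr; exact: freduce_id (freduce_reduced w).
Qed.

Lemma freduce_linv w : freduce (rev (map linv w) ++ w) = [::].
Proof.
elim: w => [|l w IH] //=.
rewrite rev_cons -cats1 -catA /= /freduce foldr_cat /=.
have := red_consK (linv l) (freduce_reduced w); rewrite linvK /freduce => ->.
by rewrite -foldr_cat.
Qed.

#[export] Instance F2_laws : group_laws F2.
Proof.
split.
- by move=> [u hu] [v hv] [w hw]; apply: val_inj; rewrite /= freduce_catl freduce_catr catA.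
- by move=> [u hu]; apply: val_inj; rewrite /= freduce_id.
- by move=> [u hu]; apply: val_inj; rewrite /= cats0 freduce_id.
- by move=> [u hu]; apply: val_inj; rewrite /= freduce_catl freduce_linv.
- move=> [u hu]; apply: val_inj; rewrite /= freduce_catr.
  have := freduce_linv (rev (map linv u)).
  by rewrite map_rev revK -map_comp (eq_map linvK) map_id.
Qed.

Section F2Lift.
Context {K : grp} {HK : group_laws K}.
Variables x y : car K.

Definition letter_val (l : letter) : car K :=
  let g := if l.1 then y else x in if l.2 then ginv g else g.
Definition lift_word (w : seq letter) : car K :=
  foldr (fun l acc => gmul (letter_val l) acc) (gone K) w.
Definition F2_lift (u : car F2) : car K := lift_word (sval u).

Lemma lift_word_cat u w : lift_word (u ++ w) = gmul (lift_word u) (lift_word w).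
Proof. by elim: u => [|l u IH] /=; rewrite ?mul1g // IH mulgA. Qed.

Lemma letter_val_linv l : letter_val (linv l) = ginv (letter_val l).
Proof. by case: l => [b []]; rewrite /letter_val /= ?invgK. Qed.

Lemma lift_word_red_cons l w : lift_word (red_cons l w) = gmul (letter_val l) (lift_word w).
Proof.
case: w => [|m w] //=; case: eqP => [->|] //=.
by rewrite letter_val_linv mulVKg.
Qed.

Lemma lift_word_freduce w : lift_word (freduce w) = lift_word w.
Proof. by elim: w => [|l w IH] //=; rewrite lift_word_red_cons IH. Qed.

Lemma F2_lift_morph : is_morph F2_lift.
Proof. by move=> u v; rewrite /F2_lift /= lift_word_freduce lift_word_cat. Qed.

Lemma F2_lift_x : F2_lift F2x = x.
Proof. exact: mulg1. Qed.

Lemma F2_lift_y : F2_lift F2y = y.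
Proof. exact: mulg1. Qed.

End F2Lift.

Section Comap.
Context {K K' : grp} {HK : group_laws K} {HK' : group_laws K'}.
Variables (phi : car K -> car K') (c : car K' -> rat) (X Y : car K).
Hypothesis Hphi : is_morph phi.

Lemma step_bounded_comap X' Y' : phi X = X' -> phi Y = Y' ->
  step_bounded c X' Y' -> step_bounded (fun q => c (phi q)) X Y.
Proof.
move=> hX hY hc Z q hZ; rewrite Hphi morphV //.
by apply: hc; case: hZ => ->; [left|right].
Qed.

Lemma exp_separating_comap X' Y' : phi X = X' -> phi Y = Y' ->
  exp_separating c X' Y' -> exp_separating (fun q => c (phi q)) X Y.
Proof. by move=> hX hY h n; rewrite !morph_gpow // !morphV // hX hY. Qed.

End Comap.

Lemma Ga_base : Ga = base (delta (gone F2)).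
Proof.
congr (_, _); apply: functional_extensionality => v.
by rewrite /delta; case: decP => /= h; case: excluded_middle_informative.
Qed.

Lemma G'x_wreath_K : G'x = wreath_K Kts.
Proof. exact: wreath_K_mul. Qed.

Theorem corollary3p2 :
  exp_preceq_Dist G_gens H_gens /\ exp_preceq_Dist G'_gens H'_gens.
Proof.
split.
- have -> : H_gens = subgroup_gens Gx Gy (base (delta (gone F2))) by rewrite /H_gens Ga_base.
  pose proof (F2_lift_x Kts Kt) as hx; pose proof (F2_lift_y Kts Kt) as hy.
  pose proof (F2_lift_morph Kts Kt) as hphi.
  apply: (@exp_distortion _ _ _ _ (fun q => cZ (F2_lift Kts Kt q))
            _ _ [:: (0, false)] [:: (1, true)] [:: (2, true)]) => //.
  + exact (step_bounded_comap hphi hx hy cZ_step_bounded).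
  + by apply: letter_adds; rewrite /= Ga_base.
  + exact: letterV_translates.
  + exact: letterV_translates.
  + exact (exp_separating_comap hphi hx hy cZ_exp_separating).
- have -> : H'_gens = subgroup_gens (wreath_K Kts) G't G'a by rewrite /H'_gens G'x_wreath_K.
  apply: (@exp_distortion _ _ _ _ cZ cZ_step_bounded
            _ [:: (0, false)] [:: (2, true); (1, true)] [:: (2, true)]) => //.
  + exact: letter_adds.
  + rewrite /Kts invMg.
    exact (word_translates_cat (@letterV_translates _ G'_gens 2 Kt erefl)
                               (@letterV_translates _ G'_gens 1 Ks erefl)).
  + exact: letterV_translates.
  + exact: cZ_exp_separating.
Qed.
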